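(* Let $\pi$ be a propositional formula that is neither a tautology nor a contradiction. Then $\Box\bot\leftrightarrow[\dagger\pi]\Box\bot$ is valid (true at every world of every model).
   Context: Fix a countable non-empty set $\mathit{At}$ of atoms. Formulas are built from $\top$, atoms, $\lnot$, $\land$, $\Box$ and, for each propositional $\pi$, the operator $[\dagger\pi]$ (''after the agent forgets $\pi$''). A model is $\mathcal{M}=\langle W,R,V\rangle$, $W\neq\varnothing$, $R\subseteq W\times W$ arbitrary, $V:\mathit{At}\to\mathcal{P}(W)$, with standard Kripke semantics for $\Box$. A literal is an atom or its negation; a clause is a finite set $D$ of literals read as $\bigvee D$ ($\bigvee\varnothing:=\bot$), tautological if it contains $p$ and $\lnot p$ for some $p$. For propositional $\pi$, $\mathcal{C}(\pi)$ is the set of non-tautological clauses $D$ with $\models\pi\to\bigvee D$ and no $D'\subsetneq D$ with $\models\pi\to\bigvee D'$. For a model $\mathcal{M}$ and a non-tautological clause $D$, $\mathcal{M}^{(D)}_u=\langle W',R',V'\rangle$ has $W'=W\times\{0,1\}$, $(w,i)R'(v,j)$ iff $wRv$, $(w,0)\in V'(p)$ iff $w\in V(p)$, and $(w,1)\in V'(p)$ iff $\lnot p\in D$, or $\{p,\lnot p\}\cap D=\varnothing$ and $w\in V(p)$. Semantics: $\mathcal{M},w\models[\dagger\pi]\varphi$ iff for all $D\in\mathcal{C}(\pi)$, $\mathcal{M}^{(D)}_u,(w,0)\models\varphi$. *)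

From mathcomp Require Import all_boot finmap.
Set Implicit Arguments. Unset Strict Implicit. Unset Printing Implicit Defensive.
Local Open Scope fset_scope.

Section Logic.
Variable At : countType.

Inductive pform : Type :=
| PTop : pform
| PAtom : At -> pform
| PNeg : pform -> pform
| PAnd : pform -> pform -> pform.

(* Full language: top, atoms, neg, and, box, and [dagger pi] for propositional pi. *)
Inductive form : Type :=
| FTop : form
| FAtom : At -> form
| FNeg : form -> form
| FAnd : form -> form -> form
| FBox : form -> form
| FForget : pform -> form -> form.

Fixpoint peval (v : At -> bool) (p : pform) : bool :=
  match p with
  | PTop => true
  | PAtom a => v a
  | PNeg q => ~~ peval v q
  | PAnd q r => peval v q && peval v r
  end.

Definition tautology (p : pform) : Prop := forall v, peval v p.
Definition contradiction (p : pform) : Prop := forall v, ~~ peval v p.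

(* Literals: (true, p) is the atom p, (false, p) is its negation ~p. *)
Definition lit := (bool * At)%type.
Definition lit_eval (v : At -> bool) (l : lit) : bool :=
  if l.1 then v l.2 else ~~ v l.2.

Definition clause := {fset lit}.

Definition clause_eval (v : At -> bool) (D : clause) : Prop :=
  exists2 l, l \in D & lit_eval v l.

Definition tautological (D : clause) : Prop :=
  exists p, (true, p) \in D /\ (false, p) \in D.

Definition entails_clause (p : pform) (D : clause) : Prop :=
  forall v, peval v p -> clause_eval v D.

Definition in_C (p : pform) (D : clause) : Prop :=
  ~ tautological D /\ entails_clause p D /\
  ~ (exists D' : clause, D' `<` D /\ entails_clause p D').

Record model : Type := Model {
  W : Type;
  W_inh : inhabited W;
  R : W -> W -> Prop;
  V : At -> W -> Prop
}.

Definition upd (M : model) (D : clause) : model :=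
  {| W := (W M * bool)%type;
     W_inh := match W_inh M with inhabits w => inhabits (w, false) end;
     R := fun x y => @R M x.1 y.1;
     V := fun p x =>
       if x.2 then ((false, p) \in D) \/
                   (~ ((true, p) \in D \/ (false, p) \in D) /\ @V M p x.1)
       else @V M p x.1 |}.

Fixpoint sat (phi : form) : forall M : model, W M -> Prop :=
  match phi with
  | FTop => fun _ _ => True
  | FAtom a => fun M w => @V M a w
  | FNeg psi => fun M w => ~ @sat psi M w
  | FAnd psi chi => fun M w => @sat psi M w /\ @sat chi M w
  | FBox psi => fun M w => forall u, @R M w u -> @sat psi M u
  | FForget p psi => fun M w =>
      forall D : clause, in_C p D -> @sat psi (upd M D) (w, false)
  end.

Definition valid (phi : form) : Prop := forall (M : model) (w : W M), @sat phi M w.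

Definition FBot : form := FNeg FTop.
Definition FIff (a b : form) : form :=
  FAnd (FNeg (FAnd a (FNeg b))) (FNeg (FAnd b (FNeg a))).

End Logic.

From mathcomp Require Import all_boot finmap.
From Stdlib Require Import Classical.

Set Implicit Arguments.
Unset Strict Implicit.
Unset Printing Implicit Defensive.
Local Open Scope fset_scope.

(* Updating by a clause [D] keeps the accessibility relation of the first copy
   of [M], so a world is a dead end in [upd M D] iff it is one in [M]; hence
   both sides of the equivalence agree as soon as [C(pi)] is non-empty. It is
   non-empty when [pi] is not a tautology: a valuation [v] falsifying [pi]
   yields the clause of the literals over the atoms of [pi] that [v] falsifies,
   which is consistent and entailed by [pi], and any minimal entailed subclause
   of it lies in [C(pi)]. *)

Lemma fset_minimal_sub (K : choiceType) (P : {fset K} -> Prop) (A : {fset K}) :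
  P A -> exists2 B, B `<=` A & P B /\ ~ (exists C, C `<` B /\ P C).
Proof.
have [n] := ubnP #|` A|; elim: n A => // n IHn A ltAn PA.
have [[C [ltCA PC]] | minA] := classic (exists C, C `<` A /\ P C); last first.
  by exists A.
have ltCn : #|` C| < n by apply: leq_trans (fproper_ltn_card ltCA) _.
have [B subBC minB] := IHn C ltCn PC.
by exists B => //; apply: fsubset_trans subBC (fproper_sub ltCA).
Qed.

Section Clauses.
Variable At : countType.

Fixpoint atoms (p : pform At) : seq At :=
  match p with
  | PTop => [::]
  | PAtom a => [:: a]
  | PNeg q => atoms q
  | PAnd q r => atoms q ++ atoms r
  end.

Lemma eq_peval (u v : At -> bool) (p : pform At) :
  {in atoms p, u =1 v} -> peval u p = peval v p.
Proof.
elim: p => [|a|q IHq|q IHq r IHr] /= euv //.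
- by apply: euv; rewrite inE.
- by rewrite IHq.
- by rewrite IHq ?IHr // => a aP; apply: euv; rewrite mem_cat aP ?orbT.
Qed.

Definition falsified_clause (v : At -> bool) (p : pform At) : clause At :=
  [fset (~~ v a, a) | a in atoms p].

Lemma entails_falsified_clause (v : At -> bool) (p : pform At) :
  ~~ peval v p -> entails_clause p (falsified_clause v p).
Proof.
move=> pNv u pu.
have [a ap neq_uv] : exists2 a, a \in atoms p & u a != v a.
  apply: NNPP => eq_uv.
  have eq_p : peval u p = peval v p.
    by apply: eq_peval => a ap; apply: NNPP => neq; apply: eq_uv; exists a => //; apply/eqP.
  by move: pNv; rewrite -eq_p pu.
exists (~~ v a, a); first by apply/imfsetP; exists a.
by rewrite /lit_eval /=; case: (v a) neq_uv; case: (u a).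
Qed.

Lemma sub_falsified_clause_nontaut (v : At -> bool) (p : pform At) (D : clause At) :
  D `<=` falsified_clause v p -> ~ tautological D.
Proof.
move=> /fsubsetP subD [b [/subD/imfsetP [a _ [va eba]] /subD/imfsetP [c _ [vc ebc]]]].
by move: va vc; rewrite -eba ebc; case: (v c).
Qed.

Lemma in_C_exists (p : pform At) : ~ tautology p -> exists D, in_C p D.
Proof.
move=> pNtaut.
have [v pNv] : exists v, ~~ peval v p.
  apply: NNPP => allv; apply: pNtaut => v.
  by apply: negbNE; apply/negP => pNv; apply: allv; exists v.
have [D subD [pD minD]] := fset_minimal_sub (entails_falsified_clause pNv).
by exists D; split; first exact: sub_falsified_clause_nontaut subD.
Qed.

End Clauses.

Lemma sat_box_bot_upd (At : countType) (M : model At) (D : clause At) (w : W M) (b : bool) :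
  @sat _ (FBox (FBot At)) (upd M D) (w, b) <-> @sat _ (FBox (FBot At)) M w.
Proof.
split=> deadw u wu; first exact: (deadw (u, false) wu).
exact: (deadw u.1 wu).
Qed.

Theorem proposition3 (At : countType) (a0 : At) (pi : pform At) :
  ~ tautology pi -> ~ contradiction pi ->
  valid (FIff (FBox (FBot At)) (FForget pi (FBox (FBot At)))).
Proof.
move=> piNtaut _ M w; split=> [[deadw forgetNdead] | [forgetdead Ndeadw]].
  by apply: forgetNdead => D _; apply/sat_box_bot_upd.
apply: Ndeadw.
have [D piD] := in_C_exists piNtaut.
exact: (sat_box_bot_upd D w false).1 (forgetdead D piD).
Qed.
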